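(* For $u\in\mathbb{Z}_n$ and $j\in\mathbb{Z}_n$ set $E_{u,j}=\sum_{v=0}^{n/d-1}e_{j+vd}E_u$. Then for $j,\ell\in\{0,\dots,d-1\}$ we have $E_{u,j}E_{u,\ell}=\delta_{j\ell}E_{u,j}$, $\sum_{j=0}^{d-1}E_{u,j}=E_u$, and $E_{u,j}=E_{u,j'}$ if and only if $j\equiv j'\pmod d$. Moreover, in $\Gamma_u=\mathcal{D}(\Lambda_{n,d})E_u$: $$GE_{u,j}=q^{u+j}E_{u,j}=E_{u,j}G,\qquad XE_{u,j}=E_{u,j-1}X,$$ and $\gamma_\ell^mE_{u,j}=E_{u,j+m}\gamma_\ell^m$ if $\ell\equiv j\pmod d$, while $\gamma_\ell^mE_{u,j}=0$ otherwise.
   Context: $k$ is an algebraically closed field; $n,d$ integers with $d\geqslant2$, $d\mid n$, $\mathrm{char}\,k\nmid n$; $q$ a primitive $d$-th root of unity. $\Lambda_{n,d}$ is the path algebra of the cyclic quiver with vertices $e_i$ and arrows $a_i:e_i\to e_{i+1}$ ($i\in\mathbb{Z}_n$) modulo all paths of length $d$; $\gamma_i^m=a_{i+m-1}\cdots a_i$, $\gamma_i^0=e_i$. $\mathcal{D}(\Lambda_{n,d})$ is the Drinfel'd double of the Hopf algebra $\Lambda_{n,d}$; concretely it has basis $G^iX^j\gamma_\ell^m$ ($i,\ell\in\mathbb{Z}_n$, $0\leqslant j,m\leqslant d-1$) and is generated by $G,X,e_i,a_i$ with relations $G^n=1$, $X^d=0$, $GX=q^{-1}XG$, products of paths as in $\Lambda_{n,d}$,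 $\gamma_\ell^mG=q^{-m}G\gamma_\ell^m$, $\gamma_\ell^mX=q^{-m}X\gamma_{\ell+1}^m-q^{-m}(m)_q\gamma_{\ell+1}^{m-1}+q^{\ell+1-m}(m)_qG\gamma_{\ell+1}^{m-1}$, with $(m)_q=1+q+\cdots+q^{m-1}$. $E_u=\frac1n\sum_{i,j\in\mathbb{Z}_n}q^{-i(u+j)}G^ie_j$; these are central orthogonal idempotents summing to $1$. *)

From HB Require Import structures.
From mathcomp Require Import all_boot all_order all_algebra.
Set Implicit Arguments. Unset Strict Implicit. Unset Printing Implicit Defensive.
Import Order.TTheory GRing.Theory Num.Theory.
Local Open Scope ring_scope.

(* Indices in Z_n are represented by naturals; the families e, a : nat -> A
   are assumed n-periodic in the main statement. *)

Definition gam (k : fieldType) (A : algType k) (e a : nat -> A) (l m : nat) : A :=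
  if m == 0%N then e l else \prod_(i < m) a (l + (m.-1 - i))%N.

Definition qint (k : fieldType) (q : k) (m : nat) : k := \sum_(i < m) q ^+ i.

Definition Eu (k : fieldType) (A : algType k) (n : nat) (q : k) (G : A)
  (e : nat -> A) (u : nat) : A :=
  (n%:R)^-1 *: \sum_(i < n) \sum_(j < n) (q ^- (i * (u + j))) *: (G ^+ i * e j).

Definition Euj (k : fieldType) (A : algType k) (n d : nat) (q : k) (G : A)
  (e : nat -> A) (u j : nat) : A :=
  \sum_(v < n %/ d) e (j + v * d)%N * Eu n q G e u.

Definition Dbasis (k : fieldType) (A : algType k) (n d : nat) (G X : A)
  (e a : nat -> A) (t : 'I_n * 'I_d * 'I_n * 'I_d) : A :=
  let: (i, j, l, m) := t in G ^+ i * X ^+ j * gam e a l m.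

Arguments Dbasis {k A} n d G X e a t.

(* A is (a copy of) the Drinfel'd double D(Lambda_{n,d}): generated by G, X,
   e_i, a_i with the stated relations, and with basis G^i X^j gamma_l^m. *)
Definition is_DLambda (k : fieldType) (A : algType k) (n d : nat) (q : k)
  (G X : A) (e a : nat -> A) : Prop :=
  [/\ (forall i, e (i + n)%N = e i /\ a (i + n)%N = a i),
      (* relations of Lambda_{n,d} = kQ / (paths of length d) *)
      [/\ \sum_(i < n) e i = 1,
          (forall i j, e i * e j = if (i %% n == j %% n)%N then e i else 0),
          (forall i j, a i * e j = if (i %% n == j %% n)%N then a i else 0),
          (forall i j, e j * a i = if (j %% n == i.+1 %% n)%N then a i else 0)
        & (forall l, gam e a l d = 0)],
      [/\ G ^+ n = 1, X ^+ d = 0, G * X = q^-1 *: (X * G),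
          (forall l m, (m < d)%N -> gam e a l m * G = q ^- m *: (G * gam e a l m))
        & (forall l m, (m < d)%N ->
             gam e a l m * X =
               q ^- m *: (X * gam e a l.+1 m)
             - (q ^- m * qint q m) *: gam e a l.+1 m.-1
             + (q ^ (l.+1%:Z - m%:Z) * qint q m) *: (G * gam e a l.+1 m.-1))],
      (forall c : {ffun 'I_n * 'I_d * 'I_n * 'I_d -> k},
          \sum_t c t *: Dbasis n d G X e a t = 0 -> forall t, c t = 0)
    &
      (forall x : A, exists c : {ffun 'I_n * 'I_d * 'I_n * 'I_d -> k},
          x = \sum_t c t *: Dbasis n d G X e a t)].

From HB Require Import structures.
From mathcomp Require Import all_boot all_order all_algebra.
Import Order.TTheory GRing.Theory Num.Theory.

(* With Pi_c the projector of G onto its q^c-eigenspace (G^n = 1 and n is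
   invertible), E_u = sum_s Pi_{u+s} e_s.  Since the e_s commute with G and
   Pi_c only depends on c mod d, grouping the vertices by their class mod d
   gives E_{u,j} = Pi_{u+j} P_j, where P_j is the sum of the e_s with
   s = j (mod d).  Everything then follows from how the generators move these
   two commuting idempotents: G acts on Pi_c by q^c, X lowers both indices by
   one, and gamma_l^m raises them by m and is killed by P_j unless l = j
   (mod d).  Different classes give different E_{u,j} because Pi_c e_s is
   nonzero, by the linear independence of the G^i e_s. *)

Set Implicit Arguments.
Unset Strict Implicit.
Unset Printing Implicit Defensive.

Local Open Scope ring_scope.

Lemma natr_neq0_gt0 (R : pzSemiRingType) (m : nat) : m%:R != 0 :> R -> (0 < m)%N.
Proof. by case: m => //; rewrite eqxx. Qed.

Lemma sum_ord_shift_periodic (V : nmodType) (m t : nat) (h : nat -> V) :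
  (forall i, h (i + m)%N = h i) -> \sum_(i < m) h (t + i)%N = \sum_(i < m) h i.
Proof.
move=> hper; elim: t => [|t IHt]; first by apply: eq_bigr => i _; rewrite add0n.
rewrite -{}IHt; case: m hper => [|m] hper; first by rewrite !big_ord0.
rewrite big_ord_recr big_ord_recl /= addSnnS hper addn0 addrC.
by congr (_ + _); apply: eq_bigr => i _; rewrite addSnnS.
Qed.

Section EigenProjector.
Variables (k : fieldType) (A : algType k) (n : nat) (G : A).

Definition eigenproj (z : k) : A := n%:R^-1 *: \sum_(i < n) z ^- i *: G ^+ i.

Lemma mulr_eigenproj_twist (Y : A) (w z : k) : w != 0 ->
  Y * G = w *: (G * Y) -> Y * eigenproj z = eigenproj (z / w) * Y.
Proof.
move=> w0 YG; have YGX i : Y * G ^+ i = w ^+ i *: (G ^+ i * Y).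
  elim: i => [|i IHi]; first by rewrite !expr0 mulr1 mul1r scale1r.
  by rewrite exprSr mulrA IHi -scalerAl -!mulrA YG -scalerAr scalerA -exprSr.
rewrite -scalerAr -scalerAl mulr_sumr mulr_suml; congr (_ *: _).
apply: eq_bigr => i _; rewrite -scalerAr YGX scalerA -scalerAl.
by rewrite exprMn exprVn invfM invrK mulrC.
Qed.

Lemma commr_eigenproj (Y : A) (z : k) : Y * G = G * Y -> Y * eigenproj z = eigenproj z * Y.
Proof. by move=> YG; rewrite (@mulr_eigenproj_twist Y 1 z (oner_neq0 k)) ?divr1 ?scale1r. Qed.

Hypotheses (n0 : n%:R != 0 :> k) (Gn : G ^+ n = 1).
Variable z : k.
Hypothesis zn : z ^+ n = 1.

Let z0 : z != 0.
Proof.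
apply: contra_eq_neq zn => ->.
by rewrite expr0n gtn_eqF ?(natr_neq0_gt0 n0) // eq_sym oner_eq0.
Qed.

Lemma mul_exp_eigenproj i : G ^+ i * eigenproj z = z ^+ i *: eigenproj z.
Proof.
have mulG : G * eigenproj z = z *: eigenproj z.
  rewrite -scalerAr scalerA mulrC -scalerA; congr (_ *: _).
  have periodic j : z ^- (j + n) *: G ^+ (j + n) = z ^- j *: G ^+ j.
    by rewrite !exprD Gn zn !mulr1.
  rewrite -{2}(sum_ord_shift_periodic 1 periodic) mulr_sumr scaler_sumr.
  apply: eq_bigr => j _; rewrite -scalerAr -exprS scalerA add1n.
  by rewrite [z ^+ j.+1]exprS invfM mulrA mulfV ?mul1r.
elim: i => [|i IHi]; first by rewrite expr0 mul1r scale1r.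
by rewrite exprS -mulrA IHi -scalerAr mulG scalerA -exprSr.
Qed.

Lemma eigenproj_idem : eigenproj z * eigenproj z = eigenproj z.
Proof.
rewrite {1}/eigenproj -scalerAl mulr_suml.
under eq_bigr => i _ do rewrite -scalerAl mul_exp_eigenproj scalerA mulVf ?expf_neq0 // scale1r.
by rewrite sumr_const card_ord -scaler_nat scalerA mulVf // scale1r.
Qed.
End EigenProjector.

Section VertexClasses.
Variables (R : nzRingType) (n d : nat) (e : nat -> R).
Hypotheses (n_gt0 : (0 < n)%N) (dvd_dn : (d %| n)%N).
Hypothesis e_periodic : forall i, e (i + n)%N = e i.
Hypothesis e_mul : forall i j, e i * e j = if (i %% n == j %% n)%N then e i else 0.

Let d_gt0 : (0 < d)%N. Proof. exact: dvdn_gt0 n_gt0 dvd_dn. Qed.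

Definition vclass (j : nat) : R := \sum_(s < n | s == j %[mod d]) e s.

Lemma e_modn i : e (i %% n) = e i.
Proof.
rewrite [in RHS](divn_eq i n); elim: (i %/ n)%N => [|t IHt]; first by rewrite add0n.
by rewrite mulSnr addnAC e_periodic.
Qed.

Lemma vclassE j : vclass j = \sum_(v < n %/ d) e (j + v * d)%N.
Proof.
have e_shift v : e (j %% d + (v + n %/ d) * d)%N = e (j %% d + v * d)%N.
  by rewrite mulnDl divnK // addnA e_periodic.
rewrite {2}(divn_eq j d) addnC.
under eq_bigr do rewrite -addnA -mulnDl.
rewrite (sum_ord_shift_periodic (j %/ d)%N e_shift) /vclass.
rewrite -(big_mkord (fun s => s == j %[mod d])%N e).
rewrite big_mkcond -{1}(divnK dvd_dn) big_nat_mul big_mkord; apply: eq_bigr => v _.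
rewrite -{1}[(v * d)%N]add0n big_addn mulSn addnK -big_mkcond big_mkord /=.
under eq_bigl do rewrite addnC modnMDl modn_small ?ltn_ord //.
by rewrite (big_ord1_eq _ (fun i => e (i + v * d)%N)) ltn_pmod.
Qed.

Lemma vclass_mod j j' : (j = j' %[mod d])%N -> vclass j = vclass j'.
Proof. by move=> jj'; apply: eq_bigl => s; rewrite jj'. Qed.

Lemma commr_e i j : e i * e j = e j * e i.
Proof. by rewrite !e_mul eq_sym; case: eqP => // ij; rewrite -e_modn -ij e_modn. Qed.

Lemma vclass_mul_e j l : vclass j * e l = if (l == j %[mod d])%N then e l else 0.
Proof.
rewrite mulr_suml; under eq_bigr => s _ do rewrite e_mul (modn_small (ltn_ord s)).
rewrite -big_mkcondr (big_ord1_cond_eq _ e (fun s => s == j %[mod d])%N) ltn_pmod //= e_modn.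
by rewrite (modn_dvdm _ dvd_dn) eq_sym.
Qed.

Lemma commr_e_vclass j l : e l * vclass j = vclass j * e l.
Proof. by rewrite mulr_suml mulr_sumr; apply: eq_bigr => s _; rewrite commr_e. Qed.

Lemma vclass_mul j l : vclass j * vclass l = if (j == l %[mod d])%N then vclass j else 0.
Proof.
rewrite [vclass l]/vclass mulr_sumr.
under eq_bigr => s /eqP sl do rewrite vclass_mul_e sl eq_sym.
by case: eqP => [jl|_]; [rewrite (vclass_mod jl) | rewrite big1].
Qed.

Lemma sum_mul_e_by_class (F : nat -> R) : (forall s, F (s %% d)%N = F s) ->
  \sum_(s < n) F s * e s = \sum_(j < d) F j * vclass j.
Proof.
move=> Fmod; rewrite (partition_big (fun s : 'I_n => Ordinal (ltn_pmod s d_gt0)) predT) //=.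
apply: eq_bigr => j _; rewrite mulr_sumr; apply: eq_big => [s | s /eqP /(congr1 val) /= <-].
  by rewrite -val_eqE /= (modn_small (ltn_ord j)).
by rewrite Fmod.
Qed.
End VertexClasses.

Section DoubleIdempotents.
Variables (k : fieldType) (A : algType k) (n d : nat) (q : k) (G X : A) (e a : nat -> A).
Hypotheses (n0 : n%:R != 0 :> k) (dvd_dn : (d %| n)%N) (q_prim : d.-primitive_root q).
Hypothesis DL : is_DLambda n d q G X e a.

Let e_periodic i : e (i + n)%N = e i.
Proof. by case: DL => /(_ i) []. Qed.
Let e_mul i j : e i * e j = if (i %% n == j %% n)%N then e i else 0.
Proof. by case: DL => _ []. Qed.
Let a_mul_e i j : a i * e j = if (i %% n == j %% n)%N then a i else 0.
Proof. by case: DL => _ []. Qed.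
Let e_mul_a i j : e j * a i = if (j %% n == i.+1 %% n)%N then a i else 0.
Proof. by case: DL => _ []. Qed.
Let G_exp_n : G ^+ n = 1.
Proof. by case: DL => _ _ []. Qed.
Let GX : G * X = q^-1 *: (X * G).
Proof. by case: DL => _ _ []. Qed.
Let gam_G l m : (m < d)%N -> gam e a l m * G = q ^- m *: (G * gam e a l m).
Proof. by case: DL => _ _ [_ _ _ gG _] _ _; apply: gG. Qed.

Let Dbasis_free (c : {ffun 'I_n * 'I_d * 'I_n * 'I_d -> k}) :
  \sum_t c t *: Dbasis n d G X e a t = 0 -> forall t, c t = 0.
Proof. by case: DL => _ _ _ free _; apply: free. Qed.

Let n_gt0 : (0 < n)%N. Proof. exact: natr_neq0_gt0 n0. Qed.
Let d_gt0 : (0 < d)%N. Proof. exact: dvdn_gt0 n_gt0 dvd_dn. Qed.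
Let q_neq0 : q != 0.
Proof.
apply: contra_eq_neq (prim_expr_order q_prim) => ->.
by rewrite expr0n gtn_eqF // eq_sym oner_eq0.
Qed.
Let q_exp_n : q ^+ n = 1.
Proof. by rewrite -(divnK dvd_dn) mulnC exprM (prim_expr_order q_prim) expr1n. Qed.

Local Notation Pi c := (eigenproj n G (q ^+ c)).
Local Notation P j := (vclass n d e j).

Lemma commr_e_G l : e l * G = G * e l.
Proof. by have := gam_G l d_gt0; rewrite /gam /= expr0 invr1 scale1r. Qed.

Lemma e_mul_X l : e l * X = X * e l.+1.
Proof.
case: DL => _ _ [_ _ _ _ /(_ l 0 d_gt0) gam_X] _ _; move: gam_X.
by rewrite /gam /= /qint big_ord0 !mulr0 !scale0r expr0 invr1 scale1r subr0 addr0.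
Qed.

Lemma Pi_mod c c' : (c = c' %[mod d])%N -> Pi c = Pi c'.
Proof. by move=> cc'; rewrite -(prim_expr_mod q_prim) cc' prim_expr_mod. Qed.

Lemma Eu_by_vertex u : Eu n q G e u = \sum_(s < n) Pi (u + s) * e s.
Proof.
rewrite /Eu exchange_big scaler_sumr; apply: eq_bigr => s _.
rewrite /eigenproj -scalerAl mulr_suml; congr (_ *: _); apply: eq_bigr => i _.
by rewrite -scalerAl -exprM mulnC.
Qed.

Lemma Eu_by_class u : Eu n q G e u = \sum_(j < d) Pi (u + j) * P j.
Proof.
rewrite Eu_by_vertex (sum_mul_e_by_class _ n_gt0 dvd_dn (F := fun s => Pi (u + s))) // => s.
by apply: Pi_mod; rewrite modnDmr.
Qed.

Lemma commr_vclass_G j : P j * G = G * P j.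
Proof. by rewrite mulr_suml mulr_sumr; apply: eq_bigr => s _; rewrite commr_e_G. Qed.

Lemma commr_vclass_Pi j c : P j * Pi c = Pi c * P j.
Proof. exact/commr_eigenproj/commr_vclass_G. Qed.

Lemma commr_Pi_G c : Pi c * G = G * Pi c.
Proof. by rewrite (commr_eigenproj _ _ (erefl (G * G))). Qed.

Let qc_exp_n c : (q ^+ c) ^+ n = 1.
Proof. by rewrite -exprM mulnC exprM q_exp_n expr1n. Qed.

Lemma mul_G_Pi c : G * Pi c = q ^+ c *: Pi c.
Proof. by rewrite -[G in LHS]expr1 (mul_exp_eigenproj n0 G_exp_n (qc_exp_n c)) expr1. Qed.

Lemma Pi_idem c : Pi c * Pi c = Pi c.
Proof. exact: (eigenproj_idem n0 G_exp_n (qc_exp_n c)). Qed.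

Lemma mul_X_Pi c : X * Pi c = Pi (c + n.-1) * X.
Proof.
have XG : X * G = q *: (G * X) by rewrite GX scalerA mulfV ?scale1r.
rewrite (mulr_eigenproj_twist _ _ q_neq0 XG); congr (eigenproj _ _ _ * _).
by apply: (mulIf q_neq0); rewrite mulfVK // -exprSr -addnS prednK // exprD q_exp_n mulr1.
Qed.

Lemma mul_gam_Pi l m c : (m < d)%N -> gam e a l m * Pi c = Pi (c + m) * gam e a l m.
Proof.
move=> m_lt_d; have qm_neq0 : q ^- m != 0 by rewrite invr_eq0 expf_neq0.
by rewrite (mulr_eigenproj_twist _ _ qm_neq0 (gam_G l m_lt_d)) invrK exprD.
Qed.

Lemma G_exp_e_free l (c : 'I_n -> k) :
  \sum_(i < n) c i *: (G ^+ i * e l) = 0 -> forall i, c i = 0.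
Proof.
move=> sum0 i; pose j0 : 'I_d := Ordinal d_gt0; pose l0 : 'I_n := Ordinal (ltn_pmod l n_gt0).
pose emb (i' : 'I_n) := (i', j0, l0, j0).
pose cf := [ffun t => if t == emb t.1.1.1 then c t.1.1.1 else 0].
suff /Dbasis_free/(_ (emb i)) : \sum_t cf t *: Dbasis n d G X e a t = 0.
  by rewrite ffunE eqxx.
have cf_scale t : cf t *: Dbasis n d G X e a t =
    if t == emb t.1.1.1 then c t.1.1.1 *: Dbasis n d G X e a t else 0.
  by rewrite ffunE; case: ifP; rewrite ?scale0r.
rewrite -[RHS]sum0 (eq_bigr _ (fun t _ => cf_scale t)) -big_mkcond.
rewrite (reindex_onto emb (fun t => t.1.1.1)); last by move=> t /eqP ->.
rewrite (eq_bigl xpredT) => [|i']; last by rewrite !eqxx.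
by apply: eq_bigr => i' _; rewrite /Dbasis /= expr0 mulr1 /gam /= (e_modn e_periodic).
Qed.

Lemma Pi_mul_e_neq0 c l : Pi c * e l != 0.
Proof.
apply/eqP => Pie0.
have sum0 : \sum_(i < n) (q ^+ c) ^- i *: (G ^+ i * e l) = 0.
  move/eqP: Pie0; rewrite -scalerAl scaler_eq0 invr_eq0 (negbTE n0) mulr_suml => /eqP S0.
  by rewrite -[RHS]S0; apply: eq_bigr => i _; rewrite scalerAl.
by have := G_exp_e_free sum0 (Ordinal n_gt0); rewrite expr0 invr1 => /eqP; rewrite oner_eq0.
Qed.

Lemma mul_X_vclass j : X * P j = P (j + n.-1) * X.
Proof.
rewrite !(vclassE n_gt0 dvd_dn e_periodic) mulr_sumr mulr_suml; apply: eq_bigr => v _.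
by rewrite e_mul_X addnAC -addnS prednK // e_periodic.
Qed.

Lemma gam_mul_e l m : gam e a l m * e l = gam e a l m.
Proof.
rewrite /gam; case: m => [|m] /=; first by rewrite e_mul eqxx.
by rewrite big_ord_recr /= subnn addn0 -mulrA a_mul_e eqxx.
Qed.

Lemma e_mul_gam l m : e (l + m) * gam e a l m = gam e a l m.
Proof.
rewrite /gam; case: m => [|m] /=; first by rewrite addn0 e_mul eqxx.
by rewrite big_ord_recl /= subn0 mulrA e_mul_a addnS eqxx.
Qed.

Lemma mul_gam_vclass l m j :
  gam e a l m * P j = if (l == j %[mod d])%N then gam e a l m else 0.
Proof.
rewrite -gam_mul_e -mulrA (commr_e_vclass _ e_periodic e_mul).
by rewrite (vclass_mul_e n_gt0 dvd_dn e_periodic e_mul); case: ifP; rewrite ?mulr0.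
Qed.

Lemma mul_vclass_gam l m j :
  P (j + m) * gam e a l m = if (l == j %[mod d])%N then gam e a l m else 0.
Proof.
rewrite -e_mul_gam mulrA (vclass_mul_e n_gt0 dvd_dn e_periodic e_mul) eqn_modDr.
by case: ifP; rewrite ?mul0r.
Qed.

Lemma EujE u j : Euj n d q G e u j = Pi (u + j) * P j.
Proof.
rewrite /Euj -mulr_suml -(vclassE n_gt0 dvd_dn e_periodic) Eu_by_class mulr_sumr.
have P_mul_Pi_P (j' : 'I_d) : P j * (Pi (u + j') * P j') =
    if j' == Ordinal (ltn_pmod j d_gt0) then Pi (u + j) * P j else 0.
  rewrite mulrA commr_vclass_Pi -mulrA (vclass_mul n_gt0 dvd_dn e_periodic e_mul).
  rewrite -val_eqE /= (modn_small (ltn_ord j')) eq_sym.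
  case: eqP => [->|]; last by rewrite mulr0.
  by rewrite (Pi_mod (c' := (u + j)%N)) // modnDmr.
rewrite (eq_bigr _ (fun j' _ => P_mul_Pi_P j')) -big_mkcond.
by rewrite big_pred1_eq.
Qed.

Lemma Euj_mod u j j' : (j = j' %[mod d])%N -> Euj n d q G e u j = Euj n d q G e u j'.
Proof.
move=> jj'; rewrite !EujE (vclass_mod _ _ jj') (Pi_mod (c' := (u + j')%N)) //.
by rewrite -modnDmr jj' modnDmr.
Qed.

Lemma Euj_mul u j l : Euj n d q G e u j * Euj n d q G e u l =
  if (j == l %[mod d])%N then Euj n d q G e u j else 0.
Proof.
rewrite !EujE -mulrA (mulrA (P j)) commr_vclass_Pi -!mulrA.
rewrite (vclass_mul n_gt0 dvd_dn e_periodic e_mul) mulrA.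
case: eqP => [jl|]; last by rewrite mulr0.
by rewrite (Pi_mod (c := (u + l)%N) (c' := (u + j)%N)) ?Pi_idem // -modnDmr -jl modnDmr.
Qed.

Lemma sum_Euj u : \sum_(j < d) Euj n d q G e u j = Eu n q G e u.
Proof. by rewrite Eu_by_class; apply: eq_bigr => j _; rewrite EujE. Qed.

Lemma G_mul_Euj u j : G * Euj n d q G e u j = q ^+ (u + j) *: Euj n d q G e u j.
Proof. by rewrite EujE mulrA mul_G_Pi -scalerAl. Qed.

Lemma commr_Euj_G u j : Euj n d q G e u j * G = G * Euj n d q G e u j.
Proof. by rewrite EujE -mulrA commr_vclass_G mulrA commr_Pi_G -mulrA. Qed.

Lemma X_mul_Euj u j : X * Euj n d q G e u j = Euj n d q G e u (j + n.-1) * X.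
Proof. by rewrite !EujE mulrA mul_X_Pi -mulrA mul_X_vclass mulrA addnA. Qed.

Lemma gam_mul_Euj u l m j : (m < d)%N ->
  gam e a l m * Euj n d q G e u j =
  if (l == j %[mod d])%N then Euj n d q G e u (j + m) * gam e a l m else 0.
Proof.
move=> m_lt_d; rewrite !EujE mulrA mul_gam_Pi // -!mulrA mul_gam_vclass mul_vclass_gam.
by rewrite addnA; case: ifP; rewrite ?mulr0.
Qed.

Lemma Euj_eq_mod u j j' : Euj n d q G e u j = Euj n d q G e u j' -> (j = j' %[mod d])%N.
Proof.
move=> Ejj'; apply/eqP/negPn/negP => jj'.
have := Euj_mul u j j'; rewrite -Ejj' Euj_mul eqxx (negbTE jj') => Euj0.
have : Pi (u + j) * e j = 0.
  by rewrite -(mul0r (e j)) -Euj0 EujE -mulrA (vclass_mul_e n_gt0 dvd_dn e_periodic e_mul) eqxx.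
by move/eqP; rewrite (negbTE (Pi_mul_e_neq0 _ _)).
Qed.

End DoubleIdempotents.

Theorem mainTheorem3 (k : closedFieldType) (n d : nat) (q : k)
  (A : algType k) (G X : A) (e a : nat -> A) :
  (2 <= d)%N -> (d %| n)%N -> (n%:R : k) != 0 -> d.-primitive_root q ->
  is_DLambda n d q G X e a ->
  forall u : 'I_n,
  [/\ (forall j l : 'I_d,
         Euj n d q G e u j * Euj n d q G e u l
           = if j == l then Euj n d q G e u j else 0),
      \sum_(j < d) Euj n d q G e u j = Eu n q G e u,
      (forall j j' : nat,
         Euj n d q G e u j = Euj n d q G e u j' <-> j = j' %[mod d])
    & [/\ (forall j : nat,
         G * Euj n d q G e u j = q ^+ (u + j) *: Euj n d q G e u j
         /\ q ^+ (u + j) *: Euj n d q G e u j = Euj n d q G e u j * G),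
      (forall j : nat,
         X * Euj n d q G e u j = Euj n d q G e u (j + n.-1) * X)
    & (forall (l m j : nat), (m < d)%N ->
         gam e a l m * Euj n d q G e u j =
           if l == j %[mod d] then Euj n d q G e u (j + m) * gam e a l m
           else 0)]].
Proof.
move=> _ dvd_dn n0 q_prim DL u; split.
- by move=> j l; rewrite (Euj_mul n0 dvd_dn q_prim DL) !modn_small.
- exact: (sum_Euj n0 dvd_dn q_prim DL).
- move=> j j'; split; first exact: (Euj_eq_mod n0 dvd_dn q_prim DL).
  exact: (Euj_mod n0 dvd_dn q_prim DL).
- split=> [j | j | l m j].
  + by rewrite (commr_Euj_G n0 dvd_dn q_prim DL) (G_mul_Euj n0 dvd_dn q_prim DL).
  + exact: (X_mul_Euj n0 dvd_dn q_prim DL).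
  + exact: (gam_mul_Euj n0 dvd_dn q_prim DL).
Qed.
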